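(* For every $0<\varepsilon\le1$ there exists a function $\hat a\in C^\infty(\mathbb R)$, $\hat a\not\equiv0$, with $\operatorname{supp}\hat a\subset[-2,2]$, such that for every integer $n\ge1$ the trigonometric polynomial $$L_n(\theta):=\sum_{j\in\mathbb Z}\hat a\Big(\frac jn\Big)e^{ij\theta}$$ satisfies $$|L_n(\theta)|\le c\,n\exp\left\{-\frac{c'\varepsilon\, n|\theta|}{[\ln(e+n|\theta|)]^{1+\varepsilon}}\right\},\qquad \theta\in[-\pi,\pi],$$ where $c'>0$ is an absolute constant and $c$ depends only on $\varepsilon$. *)

From Stdlib Require Import Reals Lra.
From Coquelicot Require Import Coquelicot.
Open Scope R_scope.

Definition smooth (f : R -> R) : Prop :=
  forall (k : nat) (x : R), ex_derive_n f k x.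

(* supp f ⊂ [-2,2]; since [-2,2] is closed this is equivalent to
   f vanishing outside [-2,2]. *)
Definition supp_in_m2_2 (f : R -> R) : Prop :=
  forall x : R, 2 < Rabs x -> f x = 0.

(* Real and imaginary parts of L_n(θ) = Σ_{j∈Z} a(j/n) e^{ijθ}.
   The sum is over j = k - 2n, k = 0..4n, i.e. |j| <= 2n; all other
   terms vanish when supp a ⊂ [-2,2]. *)
Definition jidx (n k : nat) : R := INR k - 2 * INR n.

Definition L_re (a : R -> R) (n : nat) (theta : R) : R :=
  sum_f_R0 (fun k => a (jidx n k / INR n) * cos (jidx n k * theta)) (4 * n).

Definition L_im (a : R -> R) (n : nat) (theta : R) : R :=
  sum_f_R0 (fun k => a (jidx n k / INR n) * sin (jidx n k * theta)) (4 * n).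

Definition L_abs (a : R -> R) (n : nat) (theta : R) : R :=
  sqrt (L_re a n theta ^ 2 + L_im a n theta ^ 2).

(** The symbol is an infinite convolution of the tent [max 0 (1 - |x|)] with the
    normalized indicators of windows of widths
    [d_m = (ln (m + e))^(-eps) - (ln (m + 1 + e))^(-eps)], which sum to [1]. It is smooth,
    since each derivative is absorbed by one more average, and supported in [[-3/2, 3/2]];
    moreover its [k]-th finite differences of step [h] are at most [prod_(i<k) 2 h / d_i].
    After padding [L_n] with vanishing terms, [k] summations by parts gain the factor
    [|1 - e^(i theta)|^k >= (|theta| / 3)^k]. For
    [k ~ eps n |theta| / (100 (ln (e + n |theta|))^(1 + eps))] every factor [2 / (n d_i)]
    with [i < k] is at most [|theta| / (3 e)], so [|L_n| <= 6 n e^(-k)]. *)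

From Stdlib Require Import Reals Lra Lia.
From Coquelicot Require Import Coquelicot.
Open Scope R_scope.

Definition Rcontinuous (f : R -> R) : Prop := forall x, continuous f x.

Definition lipschitz1 (f : R -> R) : Prop :=
  forall x y, Rabs (f x - f y) <= Rabs (x - y).

Lemma lipschitz1_continuous f : lipschitz1 f -> Rcontinuous f.
Proof.
  intros Hf x; apply continuity_pt_filterlim.
  intros e He; exists e; split; [lra |].
  intros y [_ Hy]; unfold dist in *; simpl in *; unfold R_dist in *.
  eapply Rle_lt_trans; [apply Hf |]; lra.
Qed.

Lemma ex_RInt_Rcontinuous f a b : Rcontinuous f -> ex_RInt f a b.
Proof.
  intros Hf; apply (ex_RInt_continuous (V := R_CompleteNormedModule)).
  intros; apply Hf.
Qed.

Lemma Rcontinuous_const c : Rcontinuous (fun _ => c).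
Proof. intros x; apply continuous_const. Qed.

Lemma Rcontinuous_minus f g :
  Rcontinuous f -> Rcontinuous g -> Rcontinuous (fun t => f t - g t).
Proof. intros Hf Hg x; apply (continuous_minus f g); auto. Qed.

Lemma Rcontinuous_shift f v : Rcontinuous f -> Rcontinuous (fun t => f (t + v)).
Proof.
  intros Hf x; apply (continuous_comp (fun t => t + v) f); [| apply Hf].
  apply (continuous_plus (fun t => t) (fun _ => v));
    [apply continuous_id | apply continuous_const].
Qed.

Lemma RInt_shift f a b v : Rcontinuous f ->
  RInt (fun t => f (t + v)) a b = RInt f (a + v) (b + v).
Proof.
  intros Hf.
  rewrite <- (Rmult_1_l a) at 2; rewrite <- (Rmult_1_l b) at 2.
  rewrite <- RInt_comp_lin by (apply ex_RInt_Rcontinuous; auto).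
  apply RInt_ext; intros t _.
  replace (1 * t + v) with (t + v) by ring.
  unfold scal; simpl; unfold mult; simpl; ring.
Qed.

Lemma abs_RInt_le_const_cont f a b M : a <= b -> Rcontinuous f ->
  (forall t, a <= t <= b -> Rabs (f t) <= M) -> Rabs (RInt f a b) <= (b - a) * M.
Proof. intros; apply abs_RInt_le_const; auto; apply ex_RInt_Rcontinuous; auto. Qed.

Definition avg (d : R) (f : R -> R) (x : R) : R :=
  RInt f (x - d / 2) (x + d / 2) / d.

Section Averaging.

Variable d : R.
Hypothesis d_pos : 0 < d.

Lemma abs_div_le_of_mul a M : Rabs a <= d * M -> Rabs (a / d) <= M.
Proof.
  intros H; rewrite Rabs_div, (Rabs_pos_eq d) by lra.
  apply Rmult_le_reg_r with d; auto.
  unfold Rdiv; rewrite Rmult_assoc, Rinv_l, Rmult_1_r by lra; lra.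
Qed.

Lemma avg_abs_le f x M : Rcontinuous f -> (forall t, Rabs (f t) <= M) ->
  Rabs (avg d f x) <= M.
Proof.
  intros Hf HM; apply abs_div_le_of_mul.
  eapply Rle_trans; [apply abs_RInt_le_const_cont; auto; lra |].
  right; field.
Qed.

Lemma avg_minus f g x : Rcontinuous f -> Rcontinuous g ->
  avg d f x - avg d g x = avg d (fun t => f t - g t) x.
Proof.
  intros Hf Hg; unfold avg.
  rewrite (RInt_minus f g) by (apply ex_RInt_Rcontinuous; auto).
  unfold minus, plus, opp; simpl; field; lra.
Qed.

Lemma avg_shift f x h : Rcontinuous f -> avg d f (x + h) = avg d (fun t => f (t + h)) x.
Proof. intros Hf; unfold avg; rewrite RInt_shift by auto; do 2 f_equal; ring. Qed.

Lemma avg_minus_abs_le f g x M : Rcontinuous f -> Rcontinuous g ->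
  (forall t, Rabs (f t - g t) <= M) -> Rabs (avg d f x - avg d g x) <= M.
Proof.
  intros Hf Hg HM; rewrite avg_minus by auto.
  apply avg_abs_le; auto; apply Rcontinuous_minus; auto.
Qed.

Lemma avg_lipschitz1 f : lipschitz1 f -> lipschitz1 (avg d f).
Proof.
  intros Hf x y; pose proof (lipschitz1_continuous f Hf) as Hc.
  replace x with (0 + x) by ring; replace y with (0 + y) by ring.
  rewrite !avg_shift by auto.
  apply avg_minus_abs_le; try apply Rcontinuous_shift; auto.
  intros t; eapply Rle_trans; [apply Hf | right; f_equal; ring].
Qed.

Lemma avg_sub_self_le f x : lipschitz1 f -> Rabs (avg d f x - f x) <= d / 2.
Proof.
  intros Hf; pose proof (lipschitz1_continuous f Hf) as Hc.
  assert (Ef : f x = avg d (fun _ => f x) x).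
  { unfold avg; rewrite RInt_const; unfold scal; simpl; unfold mult; simpl; field; lra. }
  rewrite Ef, avg_minus by (auto; apply Rcontinuous_const).
  apply abs_div_le_of_mul.
  eapply Rle_trans.
  - apply abs_RInt_le_const_cont with (M := d / 2); [lra | |].
    + apply Rcontinuous_minus; [auto | apply Rcontinuous_const].
    + intros t Ht; eapply Rle_trans; [apply Hf |].
      unfold Rabs; destruct Rcase_abs; lra.
  - right; field.
Qed.

(** Moving the window by [h] changes the average only through two slices of width [h]. *)
Lemma avg_shift_sub_le F x h M : 0 <= h -> Rcontinuous F ->
  (forall t, Rabs (F t) <= M) -> Rabs (avg d F (x + h) - avg d F x) <= 2 * h * M / d.
Proof.
  intros Hh Hc HM; unfold avg.
  pose proof (fun a b => ex_RInt_Rcontinuous F a b Hc) as Hint.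
  rewrite <- (RInt_Chasles F (x + h - d / 2) (x + d / 2) (x + h + d / 2)) by auto.
  rewrite <- (RInt_Chasles F (x - d / 2) (x + h - d / 2) (x + d / 2)) by auto.
  unfold plus; simpl.
  set (A := RInt F (x + h - d / 2) (x + d / 2)).
  replace ((A + RInt F (x + d / 2) (x + h + d / 2)) / d - (RInt F (x - d / 2) (x + h - d / 2) + A) / d)
    with ((RInt F (x + d / 2) (x + h + d / 2) - RInt F (x - d / 2) (x + h - d / 2)) / d)
    by (field; lra).
  apply abs_div_le_of_mul.
  eapply Rle_trans; [apply Rabs_triang |]; rewrite Rabs_Ropp.
  pose proof (abs_RInt_le_const_cont F (x + d / 2) (x + h + d / 2) M ltac:(lra) Hc (fun t _ => HM t)).
  pose proof (abs_RInt_le_const_cont F (x - d / 2) (x + h - d / 2) M ltac:(lra) Hc (fun t _ => HM t)).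
  replace (d * (2 * h * M / d)) with (2 * h * M) by (field; lra); lra.
Qed.

Lemma is_derive_avg f x : Rcontinuous f ->
  is_derive (avg d f) x ((f (x + d / 2) - f (x - d / 2)) / d).
Proof.
  intros Hc; set (G := fun b => RInt f 0 b).
  assert (HG : forall c, is_derive (fun t => G (t + c)) x (f (x + c))).
  { intros c.
    assert (Hlin : is_derive (fun t => t + c) x 1) by (auto_derive; auto; ring).
    assert (HGb : is_derive G (x + c) (f (x + c))).
    { apply (is_derive_RInt f G 0 (x + c)); [| apply Hc].
      apply filter_forall; intros b.
      apply (RInt_correct (V := R_CompleteNormedModule)), ex_RInt_Rcontinuous; auto. }
    pose proof (is_derive_comp G (fun t => t + c) x _ _ HGb Hlin) as H.
    unfold scal in H; simpl in H; unfold mult in H; simpl in H.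
    rewrite Rmult_1_l in H; exact H. }
  pose proof (is_derive_scal _ x (/ d) _ (is_derive_minus _ _ x _ _ (HG (d / 2)) (HG (- (d / 2))))) as Hs.
  unfold minus, plus, opp in Hs; simpl in Hs.
  replace (x + - (d / 2)) with (x - d / 2) in Hs by ring.
  replace ((f (x + d / 2) - f (x - d / 2)) / d) with (/ d * (f (x + d / 2) + - f (x - d / 2)))
    by (field; lra).
  refine (is_derive_ext _ _ x _ _ Hs); intros t; unfold avg, G; simpl.
  rewrite <- (RInt_Chasles f 0 (t - d / 2) (t + d / 2)) by (apply ex_RInt_Rcontinuous; auto).
  unfold plus; simpl; replace (t + - (d / 2)) with (t - d / 2) by ring; field; lra.
Qed.

Lemma avg_eq0 f x : (forall t, x - d / 2 <= t <= x + d / 2 -> f t = 0) -> avg d f x = 0.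
Proof.
  intros H; unfold avg; rewrite (RInt_ext f (fun _ => 0)).
  - rewrite RInt_const; unfold scal; simpl; unfold mult; simpl; field; lra.
  - intros t Ht; rewrite Rmin_left, Rmax_right in Ht by lra; apply H; lra.
Qed.

End Averaging.

Lemma exp_le_exp x y : x <= y -> exp x <= exp y.
Proof. intros [H | ->]; [left; apply exp_increasing |]; lra. Qed.

Lemma exp_1_gt_2 : 2 < exp 1.
Proof. pose proof (exp_ineq1 1 ltac:(lra)); lra. Qed.

Lemma ln_ge_1 x : exp 1 <= x -> 1 <= ln x.
Proof. intros H; rewrite <- (ln_exp 1) at 1; apply ln_le; auto; apply exp_pos. Qed.

Lemma Rpower_ge_1 b z : 1 <= b -> 0 <= z -> 1 <= Rpower b z.
Proof.
  intros Hb Hz; unfold Rpower; rewrite <- exp_0; apply exp_le_exp.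
  apply Rmult_le_pos; auto; rewrite <- ln_1; apply ln_le; lra.
Qed.

(** [(ln (m + e))^(-eps)], decreasing from [1] to [0]; its decrements
    [window_len eps m ~ eps / (m (ln m)^(1 + eps))] are the widths of the successive averages.
    They sum to [1], which keeps the support of the bump inside [[-3/2, 3/2]]. *)
Definition tail_len (eps : R) (m : nat) : R := exp (- eps * ln (ln (INR m + exp 1))).

Definition window_len (eps : R) (m : nat) : R := tail_len eps m - tail_len eps (S m).

Section TailLengths.

Variable eps : R.
Hypothesis eps_pos : 0 < eps.

Lemma tail_len_pos m : 0 < tail_len eps m.
Proof. apply exp_pos. Qed.

Lemma tail_len_0 : tail_len eps 0 = 1.
Proof. unfold tail_len; simpl; rewrite Rplus_0_l, ln_exp, ln_1, Rmult_0_r; apply exp_0. Qed.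

Lemma tail_len_succ_lt m : tail_len eps (S m) < tail_len eps m.
Proof.
  unfold tail_len; apply exp_increasing.
  assert (ln (ln (INR m + exp 1)) < ln (ln (INR (S m) + exp 1))).
  { pose proof (pos_INR m); pose proof exp_1_gt_2.
    pose proof (ln_ge_1 (INR m + exp 1) ltac:(lra)).
    apply ln_increasing; [lra |]; apply ln_increasing; rewrite ?S_INR; lra. }
  nra.
Qed.

Lemma tail_len_le m n : (m <= n)%nat -> tail_len eps n <= tail_len eps m.
Proof.
  induction 1; [lra |]; pose proof (tail_len_succ_lt m0); lra.
Qed.

Lemma window_len_pos m : 0 < window_len eps m.
Proof. unfold window_len; pose proof (tail_len_succ_lt m); lra. Qed.

Lemma tail_len_vanishing eta : 0 < eta -> exists M, tail_len eps M < eta.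
Proof.
  intros Heta.
  destruct (INR_archimed 1 (exp (exp (- ln eta / eps))) ltac:(lra)) as [M HM].
  rewrite Rmult_1_r in HM; exists M.
  unfold tail_len; rewrite <- (exp_ln eta) by auto; apply exp_increasing.
  assert (H1 : exp (- ln eta / eps) < ln (INR M + exp 1)).
  { rewrite <- (ln_exp (exp (- ln eta / eps))).
    pose proof (exp_pos 1); apply ln_increasing; [apply exp_pos | lra]. }
  assert (H2 : - ln eta / eps < ln (ln (INR M + exp 1))).
  { rewrite <- (ln_exp (- ln eta / eps)) at 1; apply ln_increasing; [apply exp_pos | auto]. }
  apply Rmult_lt_compat_l with (r := eps) in H2; auto.
  replace (eps * (- ln eta / eps)) with (- ln eta) in H2 by (field; lra); lra.
Qed.

Lemma Rle_of_le_add_tail_len a b j :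
  (forall N, a <= b + tail_len eps (j + N)) -> a <= b.
Proof.
  intros H; destruct (Rle_lt_dec a b) as [| Hab]; auto.
  destruct (tail_len_vanishing (a - b) ltac:(lra)) as [M HM].
  pose proof (H M); pose proof (tail_len_le M (j + M) ltac:(lia)); lra.
Qed.

(** Mean value theorem for [t |-> (ln t)^(-eps)] on [[m + e, m + 1 + e]]. *)
Lemma window_len_ge m :
  eps / ((INR m + 1 + exp 1) * Rpower (ln (INR m + 1 + exp 1)) (1 + eps)) <= window_len eps m.
Proof.
  set (phi := fun t => exp (- eps * ln (ln t))).
  set (dphi := fun t => - eps * (/ ln t * / t) * exp (- eps * ln (ln t))).
  assert (Hd : forall t, 1 < t -> is_derive phi t (dphi t)).
  { intros t Ht; assert (0 < ln t) by (rewrite <- ln_1; apply ln_increasing; lra).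
    unfold phi, dphi; auto_derive; [repeat split; lra | field; lra]. }
  set (a := INR m + exp 1); set (b := INR m + 1 + exp 1).
  pose proof (pos_INR m); pose proof exp_1_gt_2.
  assert (Ha : exp 1 <= a) by (unfold a; lra).
  assert (Hb : b = a + 1) by (unfold a, b; ring).
  destruct (MVT_gen phi a b dphi) as [c [Hc Hmvt]].
  { intros t Ht; rewrite Rmin_left in Ht by lra; apply Hd; lra. }
  { intros t Ht; rewrite Rmin_left, Rmax_right in Ht by lra.
    apply continuity_pt_filterlim, (ex_derive_continuous phi).
    eexists; apply Hd; lra. }
  rewrite Rmin_left, Rmax_right in Hc by lra.
  replace (window_len eps m) with (phi a - phi b)
    by (unfold window_len, tail_len, phi, a, b; rewrite S_INR; reflexivity).
  replace (phi a - phi b) with (- dphi c) by (replace (b - a) with 1 in Hmvt by lra; lra).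
  assert (Hc1 : 1 <= ln c) by (apply ln_ge_1; lra).
  assert (Hcb : ln c <= ln b) by (apply ln_le; lra).
  pose proof (exp_pos (eps * ln (ln c))) as Hexp.
  assert (HE : exp (eps * ln (ln c)) <= exp (eps * ln (ln b))).
  { apply exp_le_exp, Rmult_le_compat_l; [lra |]; apply ln_le; lra. }
  rewrite Rpower_plus, Rpower_1 by lra; unfold Rpower.
  replace (- dphi c) with (eps / (c * (ln c * exp (eps * ln (ln c))))).
  2: { unfold dphi; replace (- eps * ln (ln c)) with (- (eps * ln (ln c))) by ring.
       rewrite exp_Ropp; field; repeat split; lra. }
  unfold Rdiv; apply Rmult_le_compat_l; [lra |].
  apply Rinv_le_contravar; [apply Rmult_lt_0_compat; [lra | apply Rmult_lt_0_compat; lra] |].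
  apply Rmult_le_compat; [lra | apply Rmult_le_pos; lra | lra |].
  apply Rmult_le_compat; lra.
Qed.

End TailLengths.

Definition derivable_upto (k : nat) (f : R -> R) : Prop :=
  forall k' x, (k' <= k)%nat -> ex_derive_n f k' x.

Lemma derivable_upto_shift k f b :
  derivable_upto k f -> derivable_upto k (fun y => f (y + b)).
Proof. intros H k' x Hk; apply ex_derive_n_comp_trans, H; auto. Qed.

Lemma derivable_upto_minus k f g :
  derivable_upto k f -> derivable_upto k g -> derivable_upto k (fun y => f y - g y).
Proof.
  intros Hf Hg k' x Hk.
  apply ex_derive_n_minus; apply filter_forall; intros y k'' H''; [apply Hf | apply Hg]; lia.
Qed.

Lemma derivable_upto_scal k f a : derivable_upto k f -> derivable_upto k (fun y => a * f y).
Proof. intros H k' x Hk; apply ex_derive_n_scal_l, H; auto. Qed.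

Lemma derivable_upto_of_is_derive k f g :
  (forall x, is_derive f x (g x)) -> derivable_upto k g -> derivable_upto (S k) f.
Proof.
  intros Hd Hg.
  assert (E : forall m y, Derive_n f (S m) y = Derive_n g m y).
  { induction m; intros y; [apply is_derive_unique, Hd |].
    apply Derive_ext; auto. }
  intros [| [| m]] x Hk; simpl; auto.
  - eexists; apply Hd.
  - apply (ex_derive_ext (Derive_n g m)); [intros; symmetry; apply E |].
    apply (Hg (S m) x); lia.
Qed.

Definition fdiff (h : R) (f : R -> R) (x : R) : R := f (x + h) - f x.

Definition fdiff_iter (h : R) (m : nat) (f : R -> R) : R -> R := Nat.iter m (fdiff h) f.

Lemma fdiff_iter_S h m f x :
  fdiff_iter h (S m) f x = fdiff_iter h m f (x + h) - fdiff_iter h m f x.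
Proof. reflexivity. Qed.

Lemma fdiff_iter_ext h m f g :
  (forall x, f x = g x) -> forall x, fdiff_iter h m f x = fdiff_iter h m g x.
Proof. intros H; induction m; intros x; [apply H |]; rewrite !fdiff_iter_S, !IHm; reflexivity. Qed.

Lemma fdiff_iter_continuous h m f : Rcontinuous f -> Rcontinuous (fdiff_iter h m f).
Proof.
  intros Hf; induction m; [exact Hf |].
  apply (Rcontinuous_minus (fun y => fdiff_iter h m f (y + h))); auto.
  apply Rcontinuous_shift; auto.
Qed.

Lemma fdiff_iter_avg h m d f : 0 < d -> Rcontinuous f ->
  forall x, fdiff_iter h m (avg d f) x = avg d (fdiff_iter h m f) x.
Proof.
  intros Hd Hf; induction m; intros x; [reflexivity |].
  pose proof (fdiff_iter_continuous h m f Hf).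
  rewrite !fdiff_iter_S, !IHm, avg_shift, avg_minus; auto.
  apply Rcontinuous_shift; auto.
Qed.

Lemma fdiff_iter_scale n m f : 0 < n ->
  forall x, fdiff_iter 1 m (fun y => f (y / n)) x = fdiff_iter (1 / n) m f (x / n).
Proof.
  intros Hn; induction m; intros x; [reflexivity |].
  rewrite !fdiff_iter_S, !IHm; f_equal; f_equal; field; lra.
Qed.

Lemma fdiff_iter_eq0 g m x :
  (forall i, (i <= m)%nat -> g (x + INR i) = 0) -> fdiff_iter 1 m g x = 0.
Proof.
  revert x; induction m; intros x H.
  - simpl; specialize (H 0%nat ltac:(lia)); simpl in H; rewrite Rplus_0_r in H; auto.
  - rewrite fdiff_iter_S, !IHm; [ring | |].
    + intros i Hi; apply H; lia.
    + intros i Hi; replace (x + 1 + INR i) with (x + INR (S i)) by (rewrite S_INR; ring).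
      apply H; lia.
Qed.

Definition tent (x : R) : R := Rmax 0 (1 - Rabs x).

Lemma tent_lipschitz1 : lipschitz1 tent.
Proof.
  intros x y; unfold tent, Rmax.
  destruct (Rle_dec 0 (1 - Rabs x)), (Rle_dec 0 (1 - Rabs y));
    unfold Rabs in *; repeat destruct Rcase_abs; lra.
Qed.

Lemma tent_abs_le_1 x : Rabs (tent x) <= 1.
Proof. unfold tent, Rmax; destruct Rle_dec; unfold Rabs in *; repeat destruct Rcase_abs; lra. Qed.

Lemma tent_eq0 x : 1 <= Rabs x -> tent x = 0.
Proof. intros; unfold tent, Rmax; destruct Rle_dec; lra. Qed.

Fixpoint approx (eps : R) (j N : nat) : R -> R :=
  match N with
  | O => tent
  | S N' => avg (window_len eps j) (approx eps (S j) N')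
  end.

(** The infinite convolution of the tent with the normalized indicators of the windows
    from index [j] on; it is the fixed point [bump eps j = avg (window_len eps j) (bump eps (S j))]. *)
Definition bump (eps : R) (j : nat) (x : R) : R := real (Lim_seq (fun N => approx eps j N x)).

Fixpoint fdiff_gain (eps h : R) (j k : nat) : R :=
  match k with
  | O => 1
  | S k' => 2 * h / window_len eps j * fdiff_gain eps h (S j) k'
  end.

Section Bump.

Variable eps : R.
Hypothesis eps_pos : 0 < eps.

Let window_pos := window_len_pos eps eps_pos.
Let tail_pos := tail_len_pos eps.

Lemma approx_lipschitz1 N j : lipschitz1 (approx eps j N).
Proof.
  revert j; induction N; intros j; simpl; [apply tent_lipschitz1 |].
  apply avg_lipschitz1; auto.
Qed.

Lemma approx_continuous N j : Rcontinuous (approx eps j N).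
Proof. apply lipschitz1_continuous, approx_lipschitz1. Qed.

Lemma approx_abs_le_1 N j x : Rabs (approx eps j N x) <= 1.
Proof.
  revert j x; induction N; intros j x; simpl; [apply tent_abs_le_1 |].
  apply avg_abs_le; auto; apply approx_continuous.
Qed.

Lemma approx_eq0 N j x : 1 + tail_len eps j / 2 < Rabs x -> approx eps j N x = 0.
Proof.
  revert j x; induction N; intros j x Hx; simpl.
  - apply tent_eq0; pose proof (tail_pos j); lra.
  - apply avg_eq0; auto; intros t Ht; apply IHN.
    unfold window_len in Ht; unfold Rabs in *; repeat destruct Rcase_abs; lra.
Qed.

Lemma approx_succ_sub_le N j x :
  Rabs (approx eps j (S N) x - approx eps j N x) <= window_len eps (j + N) / 2.
Proof.
  revert j x; induction N; intros j x.
  - rewrite Nat.add_0_r; apply avg_sub_self_le; auto; apply tent_lipschitz1.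
  - change (Rabs (avg (window_len eps j) (approx eps (S j) (S N)) x
                 - avg (window_len eps j) (approx eps (S j) N) x) <= window_len eps (j + S N) / 2).
    apply avg_minus_abs_le; [auto | apply approx_continuous | apply approx_continuous |].
    intros t; replace (j + S N)%nat with (S j + N)%nat by lia; apply IHN.
Qed.

Lemma approx_sub_le N p j x :
  Rabs (approx eps j (N + p) x - approx eps j N x) <= tail_len eps (j + N) / 2.
Proof.
  enough (H : Rabs (approx eps j (N + p) x - approx eps j N x)
              <= (tail_len eps (j + N) - tail_len eps (j + N + p)) / 2)
    by (pose proof (tail_pos (j + N + p)); lra).
  induction p.
  - rewrite !Nat.add_0_r, Rminus_eq_0, Rabs_R0; lra.
  - pose proof (approx_succ_sub_le (N + p) j x) as Hs; unfold window_len in Hs.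
    rewrite Nat.add_succ_r.
    replace (S (j + (N + p))) with (j + N + S p)%nat in Hs by lia.
    replace (j + (N + p))%nat with (j + N + p)%nat in Hs by lia.
    replace (approx eps j (S (N + p)) x - approx eps j N x) with
      ((approx eps j (S (N + p)) x - approx eps j (N + p) x)
       + (approx eps j (N + p) x - approx eps j N x)) by ring.
    eapply Rle_trans; [apply Rabs_triang |]; lra.
Qed.

Lemma ex_finite_lim_approx j x : ex_finite_lim_seq (fun N => approx eps j N x).
Proof.
  apply ex_lim_seq_cauchy_corr; intros [eta Heta]; simpl.
  destruct (tail_len_vanishing eps eps_pos eta Heta) as [M HM].
  exists M; intros n m Hn Hm.
  pose proof (approx_sub_le M (n - M) j x) as A.
  pose proof (approx_sub_le M (m - M) j x) as B.
  replace (M + (n - M))%nat with n in A by lia.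
  replace (M + (m - M))%nat with m in B by lia.
  pose proof (tail_len_le eps eps_pos M (j + M) ltac:(lia)).
  replace (approx eps j n x - approx eps j m x) with
    ((approx eps j n x - approx eps j M x) - (approx eps j m x - approx eps j M x)) by ring.
  eapply Rle_lt_trans; [apply Rabs_triang |]; rewrite Rabs_Ropp; lra.
Qed.

Lemma bump_approx_le N j x :
  Rabs (bump eps j x - approx eps j N x) <= tail_len eps (j + N) / 2.
Proof.
  destruct (ex_finite_lim_approx j x) as [l Hl].
  replace (bump eps j x) with l by (unfold bump; rewrite (is_lim_seq_unique _ _ Hl); reflexivity).
  apply is_lim_seq_spec in Hl.
  apply Rle_plus_epsilon; intros e He.
  destruct (Hl (mkposreal e He)) as [M HM]; simpl in HM.
  pose proof (HM (N + M)%nat ltac:(lia)); pose proof (approx_sub_le N M j x).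
  replace (l - approx eps j N x) with
    (- (approx eps j (N + M) x - l) + (approx eps j (N + M) x - approx eps j N x)) by ring.
  eapply Rle_trans; [apply Rabs_triang |]; rewrite Rabs_Ropp; lra.
Qed.

Lemma bump_lipschitz1 j : lipschitz1 (bump eps j).
Proof.
  intros x y; apply (Rle_of_le_add_tail_len eps eps_pos _ _ j); intros N.
  pose proof (bump_approx_le N j x); pose proof (bump_approx_le N j y).
  pose proof (approx_lipschitz1 N j x y).
  replace (bump eps j x - bump eps j y) with
    ((bump eps j x - approx eps j N x) - (bump eps j y - approx eps j N y)
     + (approx eps j N x - approx eps j N y)) by ring.
  eapply Rle_trans; [apply Rabs_triang |].
  eapply Rle_trans; [apply Rplus_le_compat_r, Rabs_triang |]; rewrite Rabs_Ropp; lra.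
Qed.

Lemma bump_continuous j : Rcontinuous (bump eps j).
Proof. apply lipschitz1_continuous, bump_lipschitz1. Qed.

Lemma bump_abs_le_1 j x : Rabs (bump eps j x) <= 1.
Proof.
  apply (Rle_of_le_add_tail_len eps eps_pos _ _ j); intros N.
  pose proof (bump_approx_le N j x); pose proof (approx_abs_le_1 N j x).
  replace (bump eps j x) with ((bump eps j x - approx eps j N x) + approx eps j N x) by ring.
  eapply Rle_trans; [apply Rabs_triang |]; pose proof (tail_pos (j + N)); lra.
Qed.

Lemma bump_eq0 j x : 1 + tail_len eps j / 2 < Rabs x -> bump eps j x = 0.
Proof.
  intros Hx; apply Rabs_eq_0, Rle_antisym; [| apply Rabs_pos].
  apply (Rle_of_le_add_tail_len eps eps_pos _ _ j); intros N.
  pose proof (bump_approx_le N j x) as H.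
  rewrite (approx_eq0 N j x Hx), Rminus_0_r in H; pose proof (tail_pos (j + N)); lra.
Qed.

Lemma bump_avg j x : bump eps j x = avg (window_len eps j) (bump eps (S j)) x.
Proof.
  apply Rminus_diag_uniq, Rabs_eq_0, Rle_antisym; [| apply Rabs_pos].
  apply (Rle_of_le_add_tail_len eps eps_pos _ _ (S j)); intros N.
  pose proof (bump_approx_le (S N) j x) as H.
  change (approx eps j (S N) x) with (avg (window_len eps j) (approx eps (S j) N) x) in H.
  replace (j + S N)%nat with (S j + N)%nat in H by lia.
  assert (Havg : Rabs (avg (window_len eps j) (approx eps (S j) N) x
                       - avg (window_len eps j) (bump eps (S j)) x) <= tail_len eps (S j + N) / 2).
  { apply avg_minus_abs_le; [auto | apply approx_continuous | apply bump_continuous |].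
    intros t; rewrite Rabs_minus_sym; apply bump_approx_le. }
  replace (bump eps j x - avg (window_len eps j) (bump eps (S j)) x) with
    ((bump eps j x - avg (window_len eps j) (approx eps (S j) N) x)
     + (avg (window_len eps j) (approx eps (S j) N) x - avg (window_len eps j) (bump eps (S j)) x))
    by ring.
  eapply Rle_trans; [apply Rabs_triang |]; lra.
Qed.

Lemma bump_0_ge : 1 / 2 <= bump eps 0 0.
Proof.
  pose proof (bump_approx_le 0 0 0) as H; simpl in H; rewrite tail_len_0 in H by auto.
  unfold tent in H; rewrite Rabs_R0, Rminus_0_r, Rmax_right in H by lra.
  unfold Rabs in H; destruct Rcase_abs; lra.
Qed.

Lemma bump_derivable_upto k j : derivable_upto k (bump eps j).
Proof.
  revert j; induction k; intros j.
  - intros k' x Hk; replace k' with 0%nat by lia; simpl; auto.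
  - set (d := window_len eps j).
    apply (derivable_upto_of_is_derive k _
             (fun y => / d * (bump eps (S j) (y + d / 2) - bump eps (S j) (y + - (d / 2))))).
    + intros x; apply (is_derive_ext (avg d (bump eps (S j)))).
      { intros t; symmetry; apply bump_avg. }
      replace (/ d * (bump eps (S j) (x + d / 2) - bump eps (S j) (x + - (d / 2)))) with
        ((bump eps (S j) (x + d / 2) - bump eps (S j) (x - d / 2)) / d)
        by (unfold Rminus; field; apply Rgt_not_eq, window_pos).
      apply is_derive_avg; [apply window_pos | apply bump_continuous].
    + apply derivable_upto_scal, derivable_upto_minus; apply derivable_upto_shift, IHk.
Qed.

Lemma bump_smooth j : smooth (bump eps j).
Proof. intros k x; apply (bump_derivable_upto k j k x); lia. Qed.

Lemma fdiff_gain_nonneg h k j : 0 <= h -> 0 <= fdiff_gain eps h j k.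
Proof.
  intros Hh; revert j; induction k; intros j; simpl; [lra |].
  apply Rmult_le_pos; auto; unfold Rdiv; apply Rmult_le_pos; [lra |].
  left; apply Rinv_0_lt_compat, window_pos.
Qed.

Lemma fdiff_gain_le_pow h q k j : 0 <= h ->
  (forall i, (i < k)%nat -> 2 * h / window_len eps (j + i) <= q) -> fdiff_gain eps h j k <= q ^ k.
Proof.
  intros Hh; revert j; induction k; intros j H; simpl; [lra |].
  pose proof (H 0%nat ltac:(lia)) as H0; rewrite Nat.add_0_r in H0.
  apply Rmult_le_compat; auto.
  - unfold Rdiv; apply Rmult_le_pos; [lra | left; apply Rinv_0_lt_compat, window_pos].
  - apply fdiff_gain_nonneg; auto.
  - apply IHk; intros i Hi; replace (S j + i)%nat with (j + S i)%nat by lia; apply H; lia.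
Qed.

(** Each window average trades one difference of step [h] for a factor [2 h / window]. *)
Lemma bump_fdiff_iter_le h k j x : 0 <= h ->
  Rabs (fdiff_iter h k (bump eps j) x) <= fdiff_gain eps h j k.
Proof.
  intros Hh; revert j x; induction k; intros j x; [apply bump_abs_le_1 |].
  rewrite fdiff_iter_S, !(fdiff_iter_ext h k _ _ (bump_avg j)).
  rewrite !fdiff_iter_avg by (apply window_pos || apply bump_continuous).
  simpl fdiff_gain.
  replace (2 * h / window_len eps j * fdiff_gain eps h (S j) k) with
    (2 * h * fdiff_gain eps h (S j) k / window_len eps j)
    by (field; apply Rgt_not_eq, window_pos).
  apply avg_shift_sub_le; auto; apply fdiff_iter_continuous, bump_continuous.
Qed.

End Bump.

Definition cos_sum (g : R -> R) (x0 th : R) (N : nat) : R :=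
  sum_f_R0 (fun i => g (x0 + INR i) * cos ((x0 + INR i) * th)) N.

Definition sin_sum (g : R -> R) (x0 th : R) (N : nat) : R :=
  sum_f_R0 (fun i => g (x0 + INR i) * sin ((x0 + INR i) * th)) N.

Lemma cos_sum_shift g x0 th N :
  sum_f_R0 (fun i => g (x0 + INR i + 1) * cos ((x0 + INR i) * th)) N =
  cos th * (cos_sum g x0 th N - g x0 * cos (x0 * th)
            + g (x0 + INR N + 1) * cos ((x0 + INR N + 1) * th)) +
  sin th * (sin_sum g x0 th N - g x0 * sin (x0 * th)
            + g (x0 + INR N + 1) * sin ((x0 + INR N + 1) * th)).
Proof.
  assert (Hc : forall a, cos a = cos (a + th) * cos th + sin (a + th) * sin th)
    by (intros a; rewrite <- cos_minus; f_equal; ring).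
  unfold cos_sum, sin_sum; induction N.
  - simpl; rewrite !Rplus_0_r, (Hc (x0 * th)).
    replace ((x0 + 1) * th) with (x0 * th + th) by ring; ring.
  - rewrite !tech5, IHN, S_INR.
    replace (x0 + (INR N + 1)) with (x0 + INR N + 1) by ring.
    replace ((x0 + INR N + 1 + 1) * th) with ((x0 + INR N + 1) * th + th) by ring.
    rewrite (Hc ((x0 + INR N + 1) * th)); ring.
Qed.

Lemma sin_sum_shift g x0 th N :
  sum_f_R0 (fun i => g (x0 + INR i + 1) * sin ((x0 + INR i) * th)) N =
  cos th * (sin_sum g x0 th N - g x0 * sin (x0 * th)
            + g (x0 + INR N + 1) * sin ((x0 + INR N + 1) * th)) -
  sin th * (cos_sum g x0 th N - g x0 * cos (x0 * th)
            + g (x0 + INR N + 1) * cos ((x0 + INR N + 1) * th)).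
Proof.
  assert (Hs : forall a, sin a = sin (a + th) * cos th - cos (a + th) * sin th)
    by (intros a; rewrite <- sin_minus; f_equal; ring).
  unfold cos_sum, sin_sum; induction N.
  - simpl; rewrite !Rplus_0_r, (Hs (x0 * th)).
    replace ((x0 + 1) * th) with (x0 * th + th) by ring; ring.
  - rewrite !tech5, IHN, S_INR.
    replace (x0 + (INR N + 1)) with (x0 + INR N + 1) by ring.
    replace ((x0 + INR N + 1 + 1) * th) with ((x0 + INR N + 1) * th + th) by ring.
    rewrite (Hs ((x0 + INR N + 1) * th)); ring.
Qed.

Section SummationByParts.

Variables (g : R -> R) (x0 th : R) (N : nat).
Hypotheses (g_first : g x0 = 0) (g_last : g (x0 + INR N + 1) = 0).

Lemma cos_sum_fdiff :
  cos_sum (fdiff 1 g) x0 th N = (cos th - 1) * cos_sum g x0 th N + sin th * sin_sum g x0 th N.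
Proof.
  unfold cos_sum at 1, fdiff.
  rewrite (sum_eq _ (fun i => g (x0 + INR i + 1) * cos ((x0 + INR i) * th)
                               - g (x0 + INR i) * cos ((x0 + INR i) * th))) by (intros; ring).
  rewrite minus_sum, cos_sum_shift, g_first, g_last; fold (cos_sum g x0 th N); ring.
Qed.

Lemma sin_sum_fdiff :
  sin_sum (fdiff 1 g) x0 th N = (cos th - 1) * sin_sum g x0 th N - sin th * cos_sum g x0 th N.
Proof.
  unfold sin_sum at 1, fdiff.
  rewrite (sum_eq _ (fun i => g (x0 + INR i + 1) * sin ((x0 + INR i) * th)
                               - g (x0 + INR i) * sin ((x0 + INR i) * th))) by (intros; ring).
  rewrite minus_sum, sin_sum_shift, g_first, g_last; fold (sin_sum g x0 th N); ring.
Qed.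

End SummationByParts.

Lemma sumsq_fdiff_iter g x0 th N k :
  (forall m, (m < k)%nat -> fdiff_iter 1 m g x0 = 0 /\ fdiff_iter 1 m g (x0 + INR N + 1) = 0) ->
  cos_sum (fdiff_iter 1 k g) x0 th N ^ 2 + sin_sum (fdiff_iter 1 k g) x0 th N ^ 2 =
  (2 - 2 * cos th) ^ k * (cos_sum g x0 th N ^ 2 + sin_sum g x0 th N ^ 2).
Proof.
  induction k; intros H; [simpl; ring |].
  change (fdiff_iter 1 (S k) g) with (fdiff 1 (fdiff_iter 1 k g)).
  destruct (H k ltac:(lia)) as [H0 H1].
  rewrite cos_sum_fdiff, sin_sum_fdiff by auto.
  rewrite <- (tech_pow_Rmult (2 - 2 * cos th) k), Rmult_assoc, <- IHk
    by (intros; apply H; lia).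
  pose proof (sin2_cos2 th); unfold Rsqr in *; nra.
Qed.

Lemma sqrt_sumsq_le G x0 th N M :
  (forall i, (i <= N)%nat -> Rabs (G (x0 + INR i)) <= M) ->
  sqrt (cos_sum G x0 th N ^ 2 + sin_sum G x0 th N ^ 2) <= INR (S N) * M.
Proof.
  assert (Hterm : forall t, Cmod (G (x0 + INR t) * cos ((x0 + INR t) * th),
                                  G (x0 + INR t) * sin ((x0 + INR t) * th)) = Rabs (G (x0 + INR t))).
  { intros t; unfold Cmod; simpl.
    rewrite <- sqrt_Rsqr_abs; f_equal.
    pose proof (sin2_cos2 ((x0 + INR t) * th)); unfold Rsqr in *; nra. }
  induction N; intros H.
  - pose proof (Hterm 0%nat); pose proof (H 0%nat ltac:(lia)).
    unfold cos_sum, sin_sum, Cmod in *; simpl sum_f_R0 in *; simpl in *; lra.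
  - unfold cos_sum, sin_sum; rewrite !tech5; fold (cos_sum G x0 th N) (sin_sum G x0 th N).
    change (sqrt (_ ^ 2 + _ ^ 2)) with
      (Cmod (Cplus (cos_sum G x0 th N, sin_sum G x0 th N)
                   (G (x0 + INR (S N)) * cos ((x0 + INR (S N)) * th),
                    G (x0 + INR (S N)) * sin ((x0 + INR (S N)) * th)))).
    eapply Rle_trans; [apply Cmod_triangle |]; rewrite Hterm.
    pose proof (IHN (fun i Hi => H i ltac:(lia))); pose proof (H (S N) ltac:(lia)).
    unfold Cmod in *; simpl fst in *; simpl snd in *; rewrite (S_INR (S N)); lra.
Qed.

Lemma sums_drop_zeros g x0 th k M : (forall i, (i < k)%nat -> g (x0 + INR i) = 0) ->
  cos_sum g x0 th (k + M) = cos_sum g (x0 + INR k) th M /\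
  sin_sum g x0 th (k + M) = sin_sum g (x0 + INR k) th M.
Proof.
  revert x0; induction k; intros x0 H; [simpl; rewrite Rplus_0_r; auto |].
  destruct (IHk (x0 + 1)) as [A B].
  { intros i Hi; replace (x0 + 1 + INR i) with (x0 + INR (S i)) by (rewrite S_INR; ring).
    apply H; lia. }
  assert (H0 := H 0%nat ltac:(lia)); simpl INR in H0; rewrite Rplus_0_r in H0.
  unfold cos_sum, sin_sum in *; simpl plus.
  rewrite !(decomp_sum _ (S (k + M))) by lia; simpl pred.
  simpl INR at 1 3; rewrite !Rplus_0_r, H0.
  assert (Hidx : forall i, x0 + INR (S i) = x0 + 1 + INR i) by (intros; rewrite S_INR; ring).
  rewrite (sum_eq (fun i => g (x0 + INR (S i)) * cos ((x0 + INR (S i)) * th))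
                  (fun i => g (x0 + 1 + INR i) * cos ((x0 + 1 + INR i) * th)))
    by (intros; rewrite Hidx; reflexivity).
  rewrite (sum_eq (fun i => g (x0 + INR (S i)) * sin ((x0 + INR (S i)) * th))
                  (fun i => g (x0 + 1 + INR i) * sin ((x0 + 1 + INR i) * th)))
    by (intros; rewrite Hidx; reflexivity).
  rewrite A, B, S_INR; replace (x0 + 1 + INR k) with (x0 + (INR k + 1)) by ring; split; ring.
Qed.

Lemma sin_ge_third t : 0 <= t <= 2 -> t / 3 <= sin t.
Proof.
  intros Ht; pose proof PI2_1.
  destruct (SIN t ltac:(lra) ltac:(lra)) as [Hlb _].
  replace (sin_lb t) with (t - t ^ 3 / 6 + t ^ 5 / 120 - t ^ 7 / 5040) in Hlb
    by (unfold sin_lb, sin_approx, sin_term; simpl; field).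
  assert (t * t <= 4) by nra.
  assert (0 <= t ^ 5) by (apply pow_le; lra).
  assert (t ^ 3 <= 4 * t) by (simpl; nra).
  assert (t ^ 7 <= 4 * t ^ 5) by (replace (t ^ 7) with (t * t * t ^ 5) by ring; nra).
  lra.
Qed.

Lemma one_minus_cos_ge th : -PI <= th <= PI -> (Rabs th / 3) ^ 2 <= 2 - 2 * cos th.
Proof.
  intros Hth.
  assert (E : 2 - 2 * cos th = 4 * sin (Rabs th / 2) ^ 2).
  { replace (cos th) with (cos (2 * (Rabs th / 2)))
      by (unfold Rabs; destruct Rcase_abs; [rewrite <- cos_neg |]; f_equal; field).
    rewrite cos_2a_sin; unfold Rsqr; ring. }
  rewrite E; pose proof PI_4.
  assert (0 <= Rabs th / 2 <= 2) by (unfold Rabs; destruct Rcase_abs; lra).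
  pose proof (sin_ge_third (Rabs th / 2) ltac:(lra)); nra.
Qed.

Lemma floor_nat y : 0 <= y -> exists k : nat, INR k <= y < INR k + 1.
Proof.
  intros Hy; destruct (INR_archimed 1 y ltac:(lra)) as [m Hm]; rewrite Rmult_1_r in Hm.
  induction m; [simpl in Hm; lra |].
  destruct (Rlt_le_dec y (INR m)) as [H | H]; [apply IHm; auto |].
  exists m; rewrite S_INR in Hm; lra.
Qed.

Lemma exp_INR k : exp (INR k) = exp 1 ^ k.
Proof. induction k; [apply exp_0 |]; rewrite S_INR, exp_plus, IHk; simpl; ring. Qed.

Section MainEstimate.

Variables (eps : R) (n : nat) (th : R).
Hypotheses (eps_pos : 0 < eps) (eps_le_1 : eps <= 1) (n_ge_1 : (1 <= n)%nat)
           (th_range : -PI <= th <= PI).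

Let nr := INR n.
Let g (t : R) := bump eps 0 (t / nr).

Lemma nr_ge_1 : 1 <= nr.
Proof. apply (le_INR 1); auto. Qed.

Lemma scaled_bump_eq0 t : 3 / 2 * nr < Rabs t -> g t = 0.
Proof.
  pose proof nr_ge_1; intros Ht; apply bump_eq0; auto; rewrite tail_len_0 by auto.
  rewrite Rabs_div, (Rabs_pos_eq nr) by lra.
  apply Rmult_lt_reg_r with nr; [lra |].
  unfold Rdiv; rewrite Rmult_assoc, Rinv_l by lra; lra.
Qed.

(** Padding [L_n] with [k] vanishing terms on each side leaves room for [k] summations
    by parts, each contributing a factor [|1 - e^{i th}| >= |th| / 3]. *)
Lemma L_abs_fdiff_le k :
  (Rabs th / 3) ^ k * L_abs (bump eps 0) n th <= INR (S (k + 4 * n)) * fdiff_gain eps (1 / nr) 0 k.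
Proof.
  pose proof nr_ge_1.
  set (x0 := - 2 * nr - INR k); set (N := (k + 4 * n)%nat).
  assert (HN : INR N = INR k + 4 * nr) by (unfold N, nr; rewrite plus_INR, mult_INR; simpl; ring).
  assert (Ere : L_re (bump eps 0) n th = cos_sum g (x0 + INR k) th (4 * n)).
  { apply sum_eq; intros i _; unfold g, jidx, x0, nr; do 3 f_equal; ring. }
  assert (Eim : L_im (bump eps 0) n th = sin_sum g (x0 + INR k) th (4 * n)).
  { apply sum_eq; intros i _; unfold g, jidx, x0, nr; do 3 f_equal; ring. }
  destruct (sums_drop_zeros g x0 th k (4 * n)) as [Ec Es].
  { intros i Hi; apply lt_INR in Hi; apply scaled_bump_eq0.
    unfold x0; unfold Rabs; destruct Rcase_abs; lra. }
  unfold L_abs; rewrite Ere, Eim, <- Ec, <- Es; fold N.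
  set (Q := cos_sum g x0 th N ^ 2 + sin_sum g x0 th N ^ 2).
  assert (HQ : cos_sum (fdiff_iter 1 k g) x0 th N ^ 2 + sin_sum (fdiff_iter 1 k g) x0 th N ^ 2
               = (2 - 2 * cos th) ^ k * Q).
  { apply sumsq_fdiff_iter; intros m Hm; apply lt_INR in Hm.
    split; apply fdiff_iter_eq0; intros i Hi; apply le_INR in Hi; apply scaled_bump_eq0;
      pose proof (pos_INR i); unfold x0; unfold Rabs; destruct Rcase_abs; lra. }
  assert (Hbound : sqrt ((2 - 2 * cos th) ^ k * Q) <= INR (S N) * fdiff_gain eps (1 / nr) 0 k).
  { rewrite <- HQ; apply sqrt_sumsq_le; intros i _.
    unfold g; rewrite fdiff_iter_scale by lra.
    apply bump_fdiff_iter_le; auto; unfold Rdiv; rewrite Rmult_1_l; left; apply Rinv_0_lt_compat; lra. }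
  eapply Rle_trans; [| exact Hbound].
  assert (HQ0 : 0 <= Q) by (unfold Q; nra).
  assert (Ht3 : 0 <= Rabs th / 3) by (pose proof (Rabs_pos th); lra).
  rewrite <- (sqrt_pow2 ((Rabs th / 3) ^ k)) by (apply pow_le; auto).
  rewrite <- sqrt_mult by (auto || apply pow2_ge_0).
  apply sqrt_le_1_alt, Rmult_le_compat_r; auto.
  rewrite <- pow_mult, Nat.mul_comm, pow_mult.
  apply pow_incr; split; [nra | apply one_minus_cos_ge; auto].
Qed.

Let x := nr * Rabs th.
Let Rp := Rpower (ln (exp 1 + x)) (1 + eps).
Let y := eps * x / (100 * Rp).

Lemma Rp_ge_1 : 1 <= Rp.
Proof.
  pose proof nr_ge_1; pose proof (Rabs_pos th).
  apply Rpower_ge_1; [apply ln_ge_1; unfold x; nra | lra].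
Qed.

Lemma y_bounds : 0 <= y <= x / 100.
Proof.
  pose proof Rp_ge_1; pose proof nr_ge_1; pose proof (Rabs_pos th).
  assert (0 <= x) by (unfold x; nra).
  assert (E : 100 * Rp * y = eps * x) by (unfold y; field; lra).
  split; nra.
Qed.

Lemma fdiff_gain_le_decay k : INR k <= y -> fdiff_gain eps (1 / nr) 0 k <= (Rabs th / (3 * exp 1)) ^ k.
Proof.
  intros Hk; pose proof nr_ge_1; pose proof Rp_ge_1; pose proof y_bounds.
  pose proof exp_1_gt_2; pose proof exp_le_3; pose proof (Rabs_pos th).
  apply fdiff_gain_le_pow; auto; [unfold Rdiv; rewrite Rmult_1_l; left; apply Rinv_0_lt_compat; lra |].
  intros i Hi; simpl plus.
  pose proof (window_len_ge eps eps_pos i) as Hw; pose proof (window_len_pos eps eps_pos i).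
  set (b := INR i + 1 + exp 1) in *; set (Rb := Rpower (ln b) (1 + eps)) in *.
  assert (Hiy : INR i + 1 <= y).
  { rewrite <- S_INR; apply Rle_trans with (INR k); [apply le_INR; lia | lra]. }
  pose proof (pos_INR i).
  assert (Hb : exp 1 <= b <= 4 * y) by (unfold b; lra).
  assert (HRb : 1 <= Rb <= Rp).
  { split; [apply Rpower_ge_1; [apply ln_ge_1 |]; lra |].
    apply Rle_Rpower_l; [lra |]; split; [pose proof (ln_ge_1 b); lra |].
    apply ln_le; lra. }
  (* the windows up to [k] are at least [eps / (b Rb)], and [b Rb <= 4 y Rp = eps x / 25] *)
  assert (K : 6 * exp 1 * (b * Rb) <= eps * x).
  { assert (E : 100 * Rp * y = eps * x) by (unfold y; field; lra).
    assert (b * Rb <= 4 * y * Rp) by (apply Rmult_le_compat; lra).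
    assert (6 * exp 1 * (b * Rb) <= 18 * (b * Rb)) by (apply Rmult_le_compat_r; nra).
    nra. }
  apply Rle_trans with (2 * (1 / nr) / (eps / (b * Rb))).
  { assert (0 < / nr) by (apply Rinv_0_lt_compat; lra).
    unfold Rdiv; rewrite Rmult_1_l; apply Rmult_le_compat_l; [lra |].
    apply Rinv_le_contravar; [apply Rmult_lt_0_compat; [lra | apply Rinv_0_lt_compat; nra] | exact Hw]. }
  replace (2 * (1 / nr) / (eps / (b * Rb))) with (6 * exp 1 * (b * Rb) / (eps * nr * (3 * exp 1)))
    by (field; repeat split; nra).
  replace (Rabs th / (3 * exp 1)) with (eps * x / (eps * nr * (3 * exp 1)))
    by (unfold x; field; repeat split; lra).
  unfold Rdiv; apply Rmult_le_compat_r; auto.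
  left; apply Rinv_0_lt_compat; repeat apply Rmult_lt_0_compat; lra.
Qed.

Lemma L_abs_bump_le :
  L_abs (bump eps 0) n th <=
  18 * INR n * exp (- (1 / 100 * eps * INR n * Rabs th) / Rpower (ln (exp 1 + INR n * Rabs th)) (1 + eps)).
Proof.
  pose proof nr_ge_1; pose proof Rp_ge_1; pose proof y_bounds as Hy.
  pose proof exp_1_gt_2; pose proof exp_le_3; pose proof PI_4.
  assert (Hth : Rabs th <= 4) by (unfold Rabs; destruct Rcase_abs; lra).
  change (INR n) with nr; change (Rpower (ln (exp 1 + nr * Rabs th)) (1 + eps)) with Rp.
  replace (- (1 / 100 * eps * nr * Rabs th) / Rp) with (- y) by (unfold y, x; field; lra).
  destruct (floor_nat y ltac:(lra)) as [k Hk].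
  pose proof (L_abs_fdiff_le k) as Hfd.
  pose proof (fdiff_gain_le_decay k ltac:(lra)) as Hgain.
  assert (Hsize : INR (S (k + 4 * n)) <= 6 * nr).
  { rewrite S_INR, plus_INR, mult_INR; fold nr; simpl (INR 4); unfold x in Hy; nra. }
  assert (Hdecay : L_abs (bump eps 0) n th <= INR (S (k + 4 * n)) * / exp 1 ^ k).
  { destruct k as [| k'].
    - simpl in Hfd, Hgain |- *; lra.
    - assert (Hth0 : 0 < Rabs th).
      { destruct (Rabs_pos th) as [| E]; auto.
        rewrite S_INR in Hk; pose proof (pos_INR k').
        unfold y, x in Hk; rewrite <- E, Rmult_0_r, Rmult_0_r in Hk; unfold Rdiv in Hk; lra. }
      apply Rmult_le_reg_l with ((Rabs th / 3) ^ S k'); [apply pow_lt; lra |].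
      eapply Rle_trans; [exact Hfd |].
      replace (Rabs th / (3 * exp 1)) with (Rabs th / 3 * / exp 1) in Hgain by (field; lra).
      rewrite Rpow_mult_distr, pow_inv in Hgain.
      replace ((Rabs th / 3) ^ S k' * (INR (S (S k' + 4 * n)) * / exp 1 ^ S k'))
        with (INR (S (S k' + 4 * n)) * ((Rabs th / 3) ^ S k' * / exp 1 ^ S k')) by ring.
      apply Rmult_le_compat_l; [apply pos_INR | exact Hgain]. }
  assert (Hexp : / exp 1 ^ k <= 3 * exp (- y)).
  { rewrite <- exp_INR, <- exp_Ropp.
    apply Rle_trans with (exp 1 * exp (- y)); [| pose proof (exp_pos (- y)); nra].
    rewrite <- exp_plus; apply exp_le_exp; lra. }
  pose proof (exp_pos (- y)); pose proof (pos_INR (S (k + 4 * n))).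
  eapply Rle_trans; [exact Hdecay |].
  replace (18 * nr * exp (- y)) with (6 * nr * (3 * exp (- y))) by ring.
  apply Rmult_le_compat; auto; left; apply Rinv_0_lt_compat, pow_lt; lra.
Qed.

End MainEstimate.

Theorem theorem2p2 :
  exists c' : R, 0 < c' /\
  forall eps : R, 0 < eps <= 1 ->
  exists a : R -> R,
    smooth a /\ (exists x : R, a x <> 0) /\ supp_in_m2_2 a /\
    exists c : R, 0 < c /\
    forall (n : nat) (theta : R), (1 <= n)%nat -> -PI <= theta <= PI ->
      L_abs a n theta <=
        c * INR n *
        exp (- (c' * eps * INR n * Rabs theta) /
             Rpower (ln (exp 1 + INR n * Rabs theta)) (1 + eps)).
Proof.
  exists (1 / 100); split; [lra |].
  intros eps [eps_pos eps_le_1]; exists (bump eps 0); split; [| split; [| split]].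
  - apply bump_smooth; auto.
  - exists 0; pose proof (bump_0_ge eps eps_pos); lra.
  - intros x Hx; apply bump_eq0; auto; rewrite tail_len_0; lra.
  - exists 18; split; [lra |].
    intros n theta Hn Htheta; apply L_abs_bump_le; auto.
Qed.
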